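(* Let $P=\langle \mathit{Init}(X),\mathit{Tr}(X,X'),\mathit{Bad}(X)\rangle$ be a safety problem over $\mathcal{T}$, and suppose the Quic3 rules are applied to $P$ in any order starting from the initial state. If Quic3 returns Cex, then $P$ is not safe (there exists a counterexample). If Quic3 returns Safe, then $P$ is safe.
   Context: $\mathcal{T}$ is the combined first-order theory of linear integer arithmetic and arrays, with sorts $\mathsf{int}$ and $\mathsf{array}$ (array indices and values have sort $\mathsf{int}$; $\mathsf{sel}$, $\mathit{store}$ are array read/write). Formulas may contain uninterpreted constants; among them are Skolem constants $\mathit{SK}=\{sk_i: i\in\mathbb{N}\}$ of sort $\mathsf{int}$. Variables of sort $\mathsf{int}$ are named $v_i$. A substitution is a partial sort-respecting map from variables to terms; $\varphi\sigma$ is its application; $\emptyset$ is the empty substitution. The Skolem substitution $\mathit{sk}$ maps $v_i\mapsto sk_i$; $L_{\mathit{sk}}$ denotes $L\,\mathit{sk}$. $\mathit{Const}(\varphi)$, $\mathit{FVars}(\varphi)$ denote uninterpreted constants and free variables; $\forall\varphi$ / $\exists\varphi$ are universal / existential closures over all free variables; $\varphi\Rightarrow\psi$ means $\varphi\to\psi$ is valid in $\mathcal{T}$. For a set $U$ of constants and formula $\varphi$, $\mathit{abs}(U,\varphi)=(\psi,\sigma)$: $\psi$ is obtained from $\varphi$ by replacing each constant of $U$ by a variable not free in $\varphi$, each $sk_i\in U$ being replaced by $v_i$; $\mathit{dom}(\sigma)=\mathit{FVars}(\psi)\setminus\mathit{FVars}(\varphi)$, $\psi\sigma=\varphi$, and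 no constant of $U$ occurs in $\psi$. For ground $\varphi$, $\exists U\cdot\varphi$ denotes $\exists\psi$ with $(\psi,\_)=\mathit{abs}(U,\varphi)$. A partial model-based projection $\textsc{pMbp}(U,\varphi,M)=(\psi,W)$ (for ground $\varphi$, $M\models\varphi$, $U\subseteq\mathit{Const}(\varphi)$) satisfies: $\psi$ is a conjunction of ground literals; $W\subseteq U$, $\mathit{Const}(\psi)\subseteq\mathit{Const}(\varphi)\setminus(U\setminus W)$; $\psi\Rightarrow\exists(U\setminus W)\cdot\varphi$; $M\models\psi$; for fixed $U,\varphi$ only finitely many values arise over all models $M$; $W$ contains no array constant. For ground $A,B$ with $A\wedge B$ unsatisfiable, $\textsc{Itp}(A,B)$ is an interpolant: a ground formula $I$ with $\mathit{Const}(I)\subseteq\mathit{Const}(A)\cap\mathit{Const}(B)$, $A\Rightarrow I$ and $I\Rightarrow\neg B$. A safety problem $\langle \mathit{Init}(X),\mathit{Tr}(X,X'),\mathit{Bad}(X)\rangle$ has a finite set $X$ of constants disjoint from $\mathit{SK}$, primed copy $X'=\{a'\mid a\in X\}$, and quantifier-free ground $\mathit{Init},\mathit{Bad}$ over $X$ and $\mathit{Tr}$ over $X\cup X'$. $\varphi'$ replaces each $a\in X$ by $a'$ in $\varphi$, and for $L'$ a formula over $X'\cup\mathit{SK}$, $L$ denotes its unprimed version. $\mathcal{F}(A)=(A(X)\wedge\mathit{Tr}(X,X'))\vee\mathit{Init}(X')$. $P$ has a counterexample of length $k$ if $\mathit{Init}(X_0)\wedge\bigwedge_{j=0}^{k-1}\mathit{Tr}(X_j,X_{j+1})\wedge\mathit{Bad}(X_k)$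 is satisfiable, where $X_j$ are disjoint copies of $X$; $P$ is safe if it has no counterexample of any length. A frame $Q$ is a finite set of pairs $(\ell,\sigma)$, $\ell$ quantifier-free over $X$ with free variables of sort $\mathsf{int}$, $\sigma$ a substitution with $\mathit{FVars}(\ell)\subseteq\mathit{dom}(\sigma)$ and range in $X'\cup\mathit{SK}$; $\forall Q$ is the set (read as conjunction) of $\forall\ell$ and $\mathit{qi}(Q)$ the conjunction of $\ell\sigma$ over $(\ell,\sigma)\in Q$. A proof obligation (POB) is $\langle m,\sigma,i\rangle$ with $m$ a conjunction of literals over $X$ with free $\mathsf{int}$ variables, $m\sigma$ ground, $i\in\mathbb N$. Quic3 maintains a POB queue $\mathcal Q$, a level $N$ and frames $Q_0,Q_1,\dots$; initially $\mathcal Q=\emptyset$, $N=0$, $Q_0=\{(\mathit{Init},\emptyset)\}$, $Q_i=\emptyset$ for $i>0$. It applies, in any order, the rules: (Safe) if some $i<N$ has $\forall Q_i\subseteq\forall Q_{i+1}$, return Safe; (Cex) if some $\langle m,\sigma,0\rangle\in\mathcal Q$, return Cex; (Unfold) if $\mathit{qi}(Q_N)\Rightarrow\neg\mathit{Bad}$, set $N\gets N+1$; (Candidate) if $m$ is a monomial with $m\Rightarrow\mathit{qi}(Q_N)\wedge\mathit{Bad}$, add $\langle m,\emptyset,N\rangle$ to $\mathcal Q$; (Predecessor) if $\langle m,\xi,i+1\rangle\in\mathcal Q$ and $M\models\mathit{qi}(Q_i)\wedge\mathit{Tr}\wedge m'_{\mathit{sk}}$, add $\langle\psi,\sigma,i\rangle$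 where $(\psi,\sigma)=\mathit{abs}(U,\varphi)$ and $(\varphi,U)=\textsc{pMbp}(X'\cup\mathit{SK},\mathit{Tr}\wedge m'_{\mathit{sk}},M)$; (NewLemma) for $0\le i<N$ and $\langle m,\sigma,i+1\rangle\in\mathcal Q$ with $\mathcal F(\mathit{qi}(Q_i))\wedge m'_{\mathit{sk}}$ unsatisfiable, let $L'=\textsc{Itp}(\mathcal F(\mathit{qi}(Q_i)),m'_{\mathit{sk}})$ and $(\ell,\_)=\mathit{abs}(\mathit{SK},L)$, and add $(\ell,\sigma)$ to $Q_j$ for all $j\le i+1$; (Push) for $0\le i<N$ and $((\varphi\vee\psi),\sigma)\in Q_i$, if $(\varphi,\sigma)\notin Q_{i+1}$, $\mathit{Init}\Rightarrow\forall\varphi$ and $(\forall\varphi)\wedge\forall Q_i\wedge\mathit{qi}(Q_i)\wedge\mathit{Tr}\Rightarrow\forall\varphi'$, add $(\varphi,\sigma)$ to $Q_j$ for all $j\le i+1$. *)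

From Stdlib Require Import ZArith List Permutation.
Import ListNotations.

Inductive sort := SInt | SArr.

Definition sort_eq_dec (a b : sort) : {a = b} + {a <> b}.
Proof. decide equality. Defined.

(* Uninterpreted constants.  [Sk i] is the Skolem constant sk_i (sort int).
   [Uc s n p] is an uninterpreted constant of sort s; the flag p = true marks
   the primed copy a' of the constant a = Uc s n false. *)
Inductive const :=
| Sk (i : nat)
| Uc (s : sort) (n : nat) (p : bool).

Definition const_eq_dec (a b : const) : {a = b} + {a <> b}.
Proof. decide equality; first [apply Nat.eq_dec | apply Bool.bool_dec | apply sort_eq_dec]. Defined.

Definition csort (c : const) : sort :=
  match c with Sk _ => SInt | Uc s _ _ => s end.

Definition is_sk (c : const) : Prop := match c with Sk _ => True | _ => False end.

Inductive term : sort -> Type :=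
| Var : forall s, nat -> term s
| Cst : forall c : const, term (csort c)
| Num : Z -> term SInt
| Add : term SInt -> term SInt -> term SInt
| Sub : term SInt -> term SInt -> term SInt
| MulC : Z -> term SInt -> term SInt
| Sel : term SArr -> term SInt -> term SInt
| Store : term SArr -> term SInt -> term SInt -> term SArr.

(* Quantifier-free formulas (all formulas manipulated by Quic3 are
   quantifier-free; closures are given semantically below). *)
Inductive form :=
| FTrue | FFalse
| FLe : term SInt -> term SInt -> form
| FEq : forall s, term s -> term s -> form
| FDvd : Z -> term SInt -> form
| FNot : form -> form
| FAnd : form -> form -> form
| FOr : form -> form -> form
| FImp : form -> form -> form.

Definition sval (s : sort) : Type := match s with SInt => Z | SArr => (Z -> Z) end.

Definition interp := forall c : const, sval (csort c).
Definition env := forall s : sort, nat -> sval s.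

Fixpoint eval (M : interp) (e : env) {s : sort} (t : term s) : sval s :=
  match t in term s0 return sval s0 with
  | Var s0 i => e s0 i
  | Cst c => M c
  | Num z => z
  | Add a b => (eval M e a + eval M e b)%Z
  | Sub a b => (eval M e a - eval M e b)%Z
  | MulC k a => (k * eval M e a)%Z
  | Sel a i => (eval M e a) (eval M e i)
  | Store a i v => fun j => if Z.eqb j (eval M e i) then eval M e v else eval M e a j
  end.

Fixpoint sat (M : interp) (e : env) (f : form) : Prop :=
  match f with
  | FTrue => True
  | FFalse => False
  | FLe a b => (eval M e a <= eval M e b)%Z
  | FEq _ a b => eval M e a = eval M e b
  | FDvd k a => Z.divide k (eval M e a)
  | FNot g => ~ sat M e g
  | FAnd g h => sat M e g /\ sat M e h
  | FOr g h => sat M e g \/ sat M e h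
  | FImp g h => sat M e g -> sat M e h
  end.

(* M |= f  (for ground f the environment is irrelevant); also the truth in M
   of the universal closure  \forall f. *)
Definition Msat (M : interp) (f : form) : Prop := forall e : env, sat M e f.

Definition valid (f : form) : Prop := forall (M : interp) (e : env), sat M e f.
Definition implies (f g : form) : Prop := valid (FImp f g).
Definition satisfiable (f : form) : Prop := exists (M : interp) (e : env), sat M e f.

Fixpoint free_t (s0 : sort) (n : nat) {s : sort} (t : term s) : Prop :=
  match t with
  | Var s1 i => s1 = s0 /\ i = n
  | Cst _ | Num _ => False
  | Add a b | Sub a b => free_t s0 n a \/ free_t s0 n b
  | MulC _ a => free_t s0 n a
  | Sel a i => free_t s0 n a \/ free_t s0 n i
  | Store a i v => free_t s0 n a \/ free_t s0 n i \/ free_t s0 n v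
  end.

Fixpoint free (s0 : sort) (n : nat) (f : form) : Prop :=
  match f with
  | FTrue | FFalse => False
  | FLe a b => free_t s0 n a \/ free_t s0 n b
  | FEq _ a b => free_t s0 n a \/ free_t s0 n b
  | FDvd _ a => free_t s0 n a
  | FNot g => free s0 n g
  | FAnd g h | FOr g h | FImp g h => free s0 n g \/ free s0 n h
  end.

Definition ground (f : form) : Prop := forall s n, ~ free s n f.

Fixpoint occurs_t (c : const) {s : sort} (t : term s) : Prop :=
  match t with
  | Var _ _ | Num _ => False
  | Cst d => d = c
  | Add a b | Sub a b => occurs_t c a \/ occurs_t c b
  | MulC _ a => occurs_t c a
  | Sel a i => occurs_t c a \/ occurs_t c i
  | Store a i v => occurs_t c a \/ occurs_t c i \/ occurs_t c v
  end.

Fixpoint occurs (c : const) (f : form) : Prop :=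
  match f with
  | FTrue | FFalse => False
  | FLe a b => occurs_t c a \/ occurs_t c b
  | FEq _ a b => occurs_t c a \/ occurs_t c b
  | FDvd _ a => occurs_t c a
  | FNot g => occurs c g
  | FAnd g h | FOr g h | FImp g h => occurs c g \/ occurs c h
  end.

Fixpoint map_t (fv : forall s, nat -> term s) (fc : forall c, term (csort c))
  {s : sort} (t : term s) : term s :=
  match t in term s0 return term s0 with
  | Var s0 i => fv s0 i
  | Cst c => fc c
  | Num z => Num z
  | Add a b => Add (map_t fv fc a) (map_t fv fc b)
  | Sub a b => Sub (map_t fv fc a) (map_t fv fc b)
  | MulC k a => MulC k (map_t fv fc a)
  | Sel a i => Sel (map_t fv fc a) (map_t fv fc i)
  | Store a i v => Store (map_t fv fc a) (map_t fv fc i) (map_t fv fc v)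
  end.

Fixpoint map_f (fv : forall s, nat -> term s) (fc : forall c, term (csort c))
  (f : form) : form :=
  match f with
  | FTrue => FTrue
  | FFalse => FFalse
  | FLe a b => FLe (map_t fv fc a) (map_t fv fc b)
  | FEq s a b => FEq s (map_t fv fc a) (map_t fv fc b)
  | FDvd k a => FDvd k (map_t fv fc a)
  | FNot g => FNot (map_f fv fc g)
  | FAnd g h => FAnd (map_f fv fc g) (map_f fv fc h)
  | FOr g h => FOr (map_f fv fc g) (map_f fv fc h)
  | FImp g h => FImp (map_f fv fc g) (map_f fv fc h)
  end.

Definition subst := forall s : sort, nat -> option (term s).

Definition empty_subst : subst := fun _ _ => None.

Definition in_dom (sg : subst) (s : sort) (n : nat) : Prop := sg s n <> None.

Definition apply_subst (sg : subst) (f : form) : form :=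
  map_f (fun s i => match sg s i with Some u => u | None => Var s i end) Cst f.

Definition sk_subst : subst :=
  fun s n => match s as s0 return option (term s0) with
             | SInt => Some (Cst (Sk n))
             | SArr => None
             end.

Definition skolemize (f : form) : form := apply_subst sk_subst f.

Definition repl_consts (g : const -> option nat) (f : form) : form :=
  map_f Var (fun c => match g c with Some n => Var (csort c) n | None => Cst c end) f.

(* abs(U, phi) = (psi, sigma), as a relation (the choice of the fresh
   variables is left open). *)
Definition abs_rel (U : const -> Prop) (phi psi : form) (sg : subst) : Prop :=
  exists g : const -> option nat,
    (forall c, U c <-> g c <> None) /\
    (forall i, U (Sk i) -> g (Sk i) = Some i) /\
    (forall c n, g c = Some n -> ~ free (csort c) n phi) /\
    psi = repl_consts g phi /\
    (forall s n, in_dom sg s n <-> (free s n psi /\ ~ free s n phi)) /\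
    apply_subst sg psi = phi /\
    (forall c, U c -> ~ occurs c psi).

Section Priming.
Variable X : list const.

Definition prime_cst (c : const) : term (csort c) :=
  match c as c0 return term (csort c0) with
  | Uc s n false =>
      if in_dec const_eq_dec (Uc s n false) X then Cst (Uc s n true)
      else Cst (Uc s n false)
  | c0 => Cst c0
  end.

Definition unprime_cst (c : const) : term (csort c) :=
  match c as c0 return term (csort c0) with
  | Uc s n true =>
      if in_dec const_eq_dec (Uc s n false) X then Cst (Uc s n false)
      else Cst (Uc s n true)
  | c0 => Cst c0
  end.

Definition primef (f : form) : form := map_f Var prime_cst f.
Definition unprimef (f : form) : form := map_f Var unprime_cst f.

Definition in_Xp (c : const) : Prop :=
  match c with Uc s n true => In (Uc s n false) X | _ => False end.
End Priming.

Definition is_atom (f : form) : Prop :=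
  match f with FLe _ _ | FEq _ _ _ | FDvd _ _ => True | _ => False end.

Definition is_lit (f : form) : Prop :=
  is_atom f \/ (exists a, f = FNot a /\ is_atom a).

Fixpoint is_conj (f : form) : Prop :=
  match f with
  | FTrue => True
  | FAnd g h => is_conj g /\ is_conj h
  | _ => is_lit f
  end.

Fixpoint disjuncts (f : form) : list form :=
  match f with
  | FOr g h => disjuncts g ++ disjuncts h
  | FFalse => []
  | _ => [f]
  end.

Definition agree_outside (V : const -> Prop) (M M' : interp) : Prop :=
  forall c, ~ V c -> M' c = M c.

Definition pmbp_ok (U : const -> Prop) (phi : form) (M : interp)
  (psi : form) (W : const -> Prop) : Prop :=
  is_conj psi /\ ground psi /\
  (forall c, W c -> U c) /\
  (forall c, occurs c psi -> occurs c phi /\ ~ (U c /\ ~ W c)) /\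
  (* psi => exists (U \ W) . phi *)
  (forall M', Msat M' psi ->
     exists M'', agree_outside (fun c => U c /\ ~ W c) M' M'' /\ Msat M'' phi) /\
  Msat M psi /\
  (forall c, W c -> csort c = SInt).

Definition itp_ok (A B I : form) : Prop :=
  ground I /\
  (forall c, occurs c I -> occurs c A /\ occurs c B) /\
  implies A I /\ implies I (FNot B).

(* the interpretation of X u X' given the two states M (for X) and M2 (for X') *)
Definition join (M M2 : interp) : interp :=
  fun c => match c as c0 return sval (csort c0) with
           | Uc s n true => M2 (Uc s n false)
           | c0 => M c0
           end.

Definition has_cex (Init Tr Bad : form) (k : nat) : Prop :=
  exists Ms : nat -> interp,
    Msat (Ms 0) Init /\
    (forall j, j < k -> Msat (join (Ms j) (Ms (S j))) Tr) /\
    Msat (Ms k) Bad.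

Definition is_safe (Init Tr Bad : form) : Prop :=
  ~ exists k, has_cex Init Tr Bad k.

Definition safety_problem (X : list const) (Init Tr Bad : form) : Prop :=
  (forall c, In c X -> exists s n, c = Uc s n false) /\
  ground Init /\ ground Tr /\ ground Bad /\
  (forall c, occurs c Init -> In c X) /\
  (forall c, occurs c Bad -> In c X) /\
  (forall c, occurs c Tr -> In c X \/ in_Xp X c).

Definition frame := list (form * subst).
Definition pob := (form * subst * nat)%type.

Record state := mkState {
  queue : list pob;
  level : nat;
  frames : nat -> frame
}.

Definition qi (Q : frame) : form :=
  fold_right (fun p acc => FAnd (apply_subst (snd p) (fst p)) acc) FTrue Q.

Definition all_Q (M : interp) (Q : frame) : Prop :=
  forall p, In p Q -> Msat M (fst p).

Definition forall_incl (Q1 Q2 : frame) : Prop :=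
  forall p, In p Q1 -> exists p', In p' Q2 /\ fst p' = fst p.

Definition add_upto (F : nat -> frame) (k : nat) (p : form * subst) : nat -> frame :=
  fun j => if Nat.leb j k then p :: F j else F j.

Section Quic3.
Variables (X : list const) (Init Tr Bad : form).

Definition init_state : state :=
  mkState [] 0 (fun i => match i with 0 => [(Init, empty_subst)] | _ => [] end).

Definition is_pob (m : form) (sg : subst) : Prop :=
  is_conj m /\ (forall c, occurs c m -> In c X) /\
  (forall s n, free s n m -> s = SInt) /\ ground (apply_subst sg m).

Definition Fop (A : form) : form := FOr (FAnd A Tr) (primef X Init).

Definition mpsk (m : form) : form := skolemize (primef X m).

Inductive step : state -> state -> Prop :=
| RUnfold : forall Qs N F,
    implies (qi (F N)) (FNot Bad) ->
    step (mkState Qs N F) (mkState Qs (S N) F)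
| RCandidate : forall Qs N F m,
    is_pob m empty_subst -> satisfiable m ->
    implies m (FAnd (qi (F N)) Bad) ->
    step (mkState Qs N F) (mkState ((m, empty_subst, N) :: Qs) N F)
| RPredecessor : forall Qs N F m xi i M phi W psi sg,
    In (m, xi, S i) Qs ->
    Msat M (FAnd (qi (F i)) (FAnd Tr (mpsk m))) ->
    pmbp_ok (fun c => (in_Xp X c \/ is_sk c) /\ occurs c (FAnd Tr (mpsk m)))
            (FAnd Tr (mpsk m)) M phi W ->
    abs_rel W phi psi sg ->
    step (mkState Qs N F) (mkState ((psi, sg, i) :: Qs) N F)
| RNewLemma : forall Qs N F m sg i Lp l sg',
    i < N ->
    In (m, sg, S i) Qs ->
    ~ satisfiable (FAnd (Fop (qi (F i))) (mpsk m)) ->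
    itp_ok (Fop (qi (F i))) (mpsk m) Lp ->
    abs_rel is_sk (unprimef X Lp) l sg' ->
    step (mkState Qs N F) (mkState Qs N (add_upto F (S i) (l, sg)))
| RPush : forall Qs N F i l phi psi sg,
    i < N ->
    In (l, sg) (F i) ->
    Permutation (disjuncts l) (disjuncts phi ++ disjuncts psi) ->
    ~ In (phi, sg) (F (S i)) ->
    (forall M, Msat M Init -> Msat M phi) ->
    (forall M, Msat M phi -> all_Q M (F i) -> Msat M (qi (F i)) -> Msat M Tr ->
               Msat M (primef X phi)) ->
    step (mkState Qs N F) (mkState Qs N (add_upto F (S i) (phi, sg))).

Inductive reachable : state -> Prop :=
| reach_init : reachable init_state
| reach_step : forall s t, reachable s -> step s t -> reachable t.

(* (Cex) is applicable: Quic3 returns Cex *)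
Definition returns_cex (s : state) : Prop :=
  exists m sg, In (m, sg, 0) (queue s).

(* (Safe) is applicable: Quic3 returns Safe *)
Definition returns_safe (s : state) : Prop :=
  exists i, i < level s /\ forall_incl (frames s i) (frames s (S i)).

End Quic3.

From Stdlib Require Import ZArith List Permutation Lia.

(* Soundness follows from an inductive invariant of the rule system.  Every
   model of a proof obligation reaches a Bad state, and obligations of level 0
   are moreover consistent with Init, so (Cex) yields a counterexample.  Every
   lemma of Q_i holds in the initial states, the lemmas of Q_{i+1} hold after
   a transition from a state satisfying Q_i, frames shrink as the level grows,
   and Q_i excludes Bad for i < N; so if Q_i is contained in Q_{i+1}, the
   lemmas of Q_i form an inductive invariant excluding Bad.  The two
   non-trivial steps are (Predecessor), where the projection property of pMbp
   turns a model of the new obligation into a transition to a model of the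
   old one, and (NewLemma), where the interpolant, read over the current state
   with its Skolem constants as free variables, follows both from Init and
   from one transition out of Q_i. *)

Lemma eval_map_t (M : interp) (e : env) fv fc s (t : term s) :
  eval M e (map_t fv fc t) =
  eval (fun c => eval M e (fc c)) (fun s n => eval M e (fv s n)) t.
Proof.
  induction t; simpl; rewrite ?IHt, ?IHt1, ?IHt2, ?IHt3; reflexivity.
Qed.

Lemma sat_map_f (M : interp) (e : env) fv fc (f : form) :
  sat M e (map_f fv fc f) <->
  sat (fun c => eval M e (fc c)) (fun s n => eval M e (fv s n)) f.
Proof. induction f; simpl; rewrite ?eval_map_t; tauto. Qed.

Lemma eval_agree (M1 M2 : interp) (e1 e2 : env) s (t : term s) :
  (forall c, occurs_t c t -> M1 c = M2 c) ->
  (forall s n, free_t s n t -> e1 s n = e2 s n) ->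
  eval M1 e1 t = eval M2 e2 t.
Proof.
  induction t; simpl; intros HM He;
    rewrite ?IHt, ?IHt1, ?IHt2, ?IHt3 by (intros; first [apply HM | apply He]; tauto);
    auto.
Qed.

Lemma sat_agree (M1 M2 : interp) (e1 e2 : env) (f : form) :
  (forall c, occurs c f -> M1 c = M2 c) ->
  (forall s n, free s n f -> e1 s n = e2 s n) ->
  sat M1 e1 f <-> sat M2 e2 f.
Proof.
  induction f; simpl; intros HM He;
    rewrite ?(eval_agree M1 M2 e1 e2 _ t), ?(eval_agree M1 M2 e1 e2 _ t0),
      ?IHf, ?IHf1, ?IHf2 by (intros; first [apply HM | apply He]; tauto);
    tauto.
Qed.

Lemma Msat_of_sat_ground (M : interp) (e : env) (f : form) :
  ground f -> sat M e f -> Msat M f.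
Proof.
  intros G H e'. revert H. apply sat_agree; [reflexivity|].
  intros s n Hf. contradiction (G s n Hf).
Qed.

Lemma occurs_map_f c fv fc (f : form) :
  occurs c (map_f fv fc f) ->
  (exists s n, free s n f /\ occurs_t c (fv s n)) \/
  (exists d, occurs d f /\ occurs_t c (fc d)).
Proof.
  assert (Ht : forall s (t : term s), occurs_t c (map_t fv fc t) ->
    (exists s n, free_t s n t /\ occurs_t c (fv s n)) \/
    (exists d, occurs_t d t /\ occurs_t c (fc d))).
  { induction t; simpl; intros H; [left; exists s, n | right; exists c0 | ..];
      firstorder. }
  induction f; simpl; intros H; try contradiction;
    repeat match goal with
           | H : _ \/ _ |- _ => destruct H
           | H : occurs_t _ (map_t _ _ _) |- _ => apply Ht in H
           end;
    firstorder.
Qed.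

Lemma occurs_disjuncts c (f : form) :
  occurs c f <-> exists d, In d (disjuncts f) /\ occurs c d.
Proof.
  induction f; simpl;
    try (split; [intro H; eexists; split; [left; reflexivity | exact H]
                | intros [d [[<- | []] H]]; exact H]; fail).
  - split; [contradiction | intros [d [[] _]]].
  - rewrite IHf1, IHf2. setoid_rewrite in_app_iff. firstorder.
Qed.

Definition abs_interp (g : const -> option nat) (M : interp) (e : env) : interp :=
  fun c => eval M e (match g c with Some n => Var (csort c) n | None => Cst c end).

Lemma sat_repl_consts g (M : interp) (e : env) (f : form) :
  sat M e (repl_consts g f) <-> sat (abs_interp g M e) e f.
Proof. exact (sat_map_f M e Var _ f). Qed.

Lemma occurs_repl_consts c g (f : form) :
  occurs c (repl_consts g f) -> occurs c f /\ g c = None.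
Proof.
  intro H. apply occurs_map_f in H.
  destruct H as [[s [n [_ []]]] | [d [Hd H]]].
  destruct (g d) eqn:Eg; simpl in H; [contradiction | subst d; auto].
Qed.

Lemma sat_apply_subst (sg : subst) (M : interp) (e : env) (f : form) :
  sat M e (apply_subst sg f) <->
  sat M (fun s n => eval M e (match sg s n with Some u => u | None => Var s n end)) f.
Proof. exact (sat_map_f M e _ Cst f). Qed.

Lemma all_Q_qi (M : interp) (Q : frame) : all_Q M Q -> Msat M (qi Q).
Proof.
  induction Q as [|p Q IH]; intros H e; simpl; auto.
  split.
  - apply sat_apply_subst, (H p); simpl; auto.
  - apply IH. intros q Hq. apply H; simpl; auto.
Qed.

Lemma sat_qi_in (M : interp) (e : env) (p : form * subst) (Q : frame) :
  In p Q -> sat M e (qi Q) -> sat M e (apply_subst (snd p) (fst p)).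
Proof.
  induction Q as [|q Q IH]; simpl; [contradiction|].
  intros [<- | Hp] [Hq HQ]; auto.
Qed.

Lemma all_Q_forall_incl (M : interp) (Q1 Q2 : frame) :
  forall_incl Q1 Q2 -> all_Q M Q2 -> all_Q M Q1.
Proof.
  intros Hincl HQ p Hp. destruct (Hincl p Hp) as [p' [Hp' <-]]. exact (HQ p' Hp').
Qed.

Lemma in_add_upto F k q j p :
  In p (add_upto F k q j) <-> (j <= k /\ p = q) \/ In p (F j).
Proof.
  unfold add_upto. destruct (Nat.leb_spec j k); simpl; [intuition | intuition lia].
Qed.

Lemma all_Q_add_upto (M : interp) F k q j :
  all_Q M (add_upto F k q j) <-> (j <= k -> Msat M (fst q)) /\ all_Q M (F j).
Proof.
  unfold all_Q. setoid_rewrite in_add_upto.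
  split.
  - intro H. split.
    + intro Hj. apply (H q). left. split; [exact Hj | reflexivity].
    + intros p Hp. apply H. right. exact Hp.
  - intros [Hq HF] p [[Hj ->] | Hp]; auto.
Qed.

Definition env0 : env :=
  fun s => match s as s0 return nat -> sval s0 with
           | SInt => fun _ => 0%Z
           | SArr => fun _ _ => 0%Z
           end.

Definition with_sk (M : interp) (e : env) : interp :=
  fun c => match c as c0 return sval (csort c0) with
           | Sk k => e SInt k
           | c0 => M c0
           end.

Definition next_state (M : interp) : interp :=
  fun c => match c as c0 return sval (csort c0) with
           | Uc s n false => M (Uc s n true)
           | c0 => M c0
           end.

Section Soundness.

Variables (X : list const) (Init Tr Bad : form).
Hypothesis X_unprimed : forall c, In c X -> exists s n, c = Uc s n false.
Hypothesis Init_ground : ground Init.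
Hypothesis Bad_ground : ground Bad.
Hypothesis Init_over_X : forall c, occurs c Init -> In c X.
Hypothesis Tr_over_X_X' : forall c, occurs c Tr -> In c X \/ in_Xp X c.

Lemma sat_primef (M M' : interp) (e : env) (f : form) :
  (forall c, occurs c f -> In c X) ->
  (forall s n, In (Uc s n false) X -> M (Uc s n true) = M' (Uc s n false)) ->
  sat M e (primef X f) <-> sat M' e f.
Proof.
  intros Hf HM. unfold primef. rewrite sat_map_f.
  apply sat_agree; [|reflexivity].
  intros c Hc. pose proof (Hf c Hc) as HcX.
  destruct (X_unprimed c HcX) as [s [n ->]]. simpl.
  destruct (in_dec const_eq_dec (Uc s n false) X); [apply HM | contradiction]; auto.
Qed.

Lemma all_Q_agree_X (M M' : interp) (Q : frame) :
  (forall p c, In p Q -> occurs c (fst p) -> In c X) ->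
  (forall c, In c X -> M c = M' c) -> all_Q M Q -> all_Q M' Q.
Proof.
  intros HQ HM H p Hp e.
  apply (sat_agree M M' e e); [intros c Hc; apply HM, (HQ p c Hp Hc) | reflexivity | apply H, Hp].
Qed.

Lemma mpsk_consts (m : form) c :
  (forall d, occurs d m -> In d X) ->
  occurs c (mpsk X m) -> in_Xp X c \/ is_sk c.
Proof.
  intros Hm H. apply occurs_map_f in H.
  destruct H as [[[|] [n [_ H]]] | [d [Hd H]]]; simpl in H.
  - subst c. right. exact I.
  - contradiction.
  - subst d. apply occurs_map_f in Hd.
    destruct Hd as [[s [n [_ []]]] | [d [Hd H]]].
    destruct (X_unprimed d (Hm d Hd)) as [s [n ->]]. simpl in H.
    destruct (in_dec const_eq_dec (Uc s n false) X) as [Hin | Hnin].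
    + simpl in H. subst c. left. exact Hin.
    + contradiction (Hnin (Hm _ Hd)).
Qed.

Definition reaches_bad (M : interp) : Prop :=
  exists k (Ms : nat -> interp),
    Ms 0 = M /\
    (forall j, j < k -> Msat (join (Ms j) (Ms (S j))) Tr) /\
    Msat (Ms k) Bad.

Section Predecessor.

Variables (m phi psi : form) (M : interp) (W : const -> Prop) (sg : subst).
Hypothesis m_over_X : forall c, occurs c m -> In c X.
Hypothesis phi_mbp :
  pmbp_ok (fun c => (in_Xp X c \/ is_sk c) /\ occurs c (FAnd Tr (mpsk X m)))
          (FAnd Tr (mpsk X m)) M phi W.
Hypothesis psi_abs : abs_rel W phi psi sg.

Lemma predecessor_over_X c : occurs c psi -> In c X.
Proof.
  destruct phi_mbp as (_ & _ & _ & phi_consts & _).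
  destruct psi_abs as (g & gW & _ & _ & -> & _).
  intro Hc. apply occurs_repl_consts in Hc as [Hc Hg].
  destruct (phi_consts c Hc) as [HcTr HnU].
  assert (HnW : ~ W c) by (rewrite gW; auto).
  destruct HcTr as [HcTr | Hcm].
  - destruct (Tr_over_X_X' c HcTr) as [HX | HX']; [exact HX|].
    contradiction HnU. repeat split; auto. left. exact HcTr.
  - contradiction HnU. repeat split; [exact (mpsk_consts m c m_over_X Hcm) | right | ]; auto.
Qed.

Lemma predecessor_model : exists e, sat M e psi.
Proof.
  destruct phi_mbp as (_ & _ & _ & _ & _ & M_phi & _).
  destruct psi_abs as (_ & _ & _ & _ & _ & _ & psi_sg & _).
  eexists. apply sat_apply_subst. rewrite psi_sg. apply (M_phi env0).
Qed.

(* A model of [psi] extends, by the projection property of pMbp, to a model of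
   [Tr /\ m'_sk]: a transition into a model of [m] whose Skolem constants
   interpret the free variables of [m]. *)
Lemma predecessor_reaches_bad :
  (forall M0 e, sat M0 e m -> reaches_bad M0) ->
  forall M0 e, sat M0 e psi -> reaches_bad M0.
Proof.
  destruct phi_mbp as (_ & phi_ground & W_U & _ & phi_proj & _).
  destruct psi_abs as (g & gW & _ & _ & -> & _).
  intros m_bad M0 e Hpsi. apply sat_repl_consts in Hpsi.
  destruct (phi_proj _ (Msat_of_sat_ground _ _ _ phi_ground Hpsi))
    as [M'' [Hagree HM'']].
  set (e1 := fun s n => eval M'' e (match sk_subst s n with Some u => u | None => Var s n end)).
  assert (Hm : sat (next_state M'') e1 m).
  { destruct (HM'' e) as [_ Hm]. unfold mpsk, skolemize in Hm.
    apply sat_apply_subst in Hm.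
    apply (sat_primef M'' (next_state M'') e1 m m_over_X); [reflexivity | exact Hm]. }
  destruct (m_bad _ _ Hm) as [k [Ms [HMs0 [Hpath HBad]]]].
  exists (S k), (fun j => match j with 0 => M0 | S j => Ms j end).
  split; [reflexivity|]. split; [|exact HBad].
  intros [|j] Hj; [|apply Hpath; lia].
  rewrite HMs0. intro e2. apply (sat_agree M'' _ e2 e2); [|reflexivity|apply HM''].
  intros c Hc. destruct (Tr_over_X_X' c Hc) as [HX | HX'].
  - destruct (X_unprimed c HX) as [s [n ->]].
    assert (HnW : ~ W (Uc s n false)) by (intro Hw; destruct (W_U _ Hw) as [[[] | []] _]).
    rewrite Hagree by tauto. unfold abs_interp.
    destruct (g (Uc s n false)) eqn:Eg; [|reflexivity].
    contradiction HnW. apply gW. congruence.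
  - destruct c as [|s n [|]]; simpl in HX'; try contradiction. reflexivity.
Qed.

End Predecessor.

(* Reading [l] in the state [M] amounts to reading [L'] with [M] as the primed
   state and the free variables of [l] as the Skolem constants. *)
Lemma sat_abs_unprimef (Lp l : form) (sg : subst) (M0 M : interp) (e : env) :
  (forall c, occurs c Lp -> in_Xp X c \/ is_sk c) ->
  abs_rel is_sk (unprimef X Lp) l sg ->
  sat M e l <-> sat (with_sk (join M0 M) e) e Lp.
Proof.
  intros HLp (g & gW & gSk & _ & -> & _).
  rewrite sat_repl_consts. unfold unprimef. rewrite sat_map_f.
  apply sat_agree; [|reflexivity].
  intros c Hc. destruct (HLp c Hc) as [HX' | Hsk].
  - destruct c as [|s n [|]]; simpl in HX'; try contradiction. simpl.
    destruct (in_dec const_eq_dec (Uc s n false) X); [|contradiction].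
    unfold abs_interp. simpl.
    destruct (g (Uc s n false)) eqn:Eg; [|reflexivity].
    contradiction (proj2 (gW (Uc s n false))). congruence.
  - destruct c as [k|]; [|contradiction]. unfold abs_interp. simpl.
    rewrite (gSk k I). reflexivity.
Qed.

Section NewLemma.

Variables (m Lp l : form) (Q : frame) (sg : subst).
Hypothesis m_over_X : forall c, occurs c m -> In c X.
Hypothesis Q_over_X : forall p c, In p Q -> occurs c (fst p) -> In c X.
Hypothesis Lp_itp : itp_ok (Fop X Init Tr (qi Q)) (mpsk X m) Lp.
Hypothesis l_abs : abs_rel is_sk (unprimef X Lp) l sg.

Lemma itp_consts c : occurs c Lp -> in_Xp X c \/ is_sk c.
Proof.
  destruct Lp_itp as (_ & Lp_consts & _).
  intro Hc. exact (mpsk_consts m c m_over_X (proj2 (Lp_consts c Hc))).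
Qed.

Lemma newlemma_over_X c : occurs c l -> In c X.
Proof.
  destruct l_abs as (g & gW & gSk & _ & -> & _).
  intro Hc. apply occurs_repl_consts in Hc as [Hc Hg].
  apply occurs_map_f in Hc. destruct Hc as [[s [n [_ []]]] | [d [Hd Hc]]].
  destruct (itp_consts d Hd) as [HX' | Hsk].
  - destruct d as [|s n [|]]; simpl in HX'; try contradiction. simpl in Hc.
    destruct (in_dec const_eq_dec (Uc s n false) X); [|contradiction].
    simpl in Hc. subst c. assumption.
  - destruct d as [k|]; [|contradiction]. simpl in Hc. subst c.
    rewrite (gSk k I) in Hg. discriminate.
Qed.

Lemma newlemma_Init (M : interp) : Msat M Init -> Msat M l.
Proof.
  destruct Lp_itp as (_ & _ & Lp_from_F & _).
  intros HInit e. apply (sat_abs_unprimef Lp l sg M M e itp_consts l_abs).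
  apply (Lp_from_F _ e). right.
  apply (sat_primef _ M e Init Init_over_X); [reflexivity | apply HInit].
Qed.

Lemma newlemma_Tr (M M2 : interp) :
  all_Q M Q -> Msat (join M M2) Tr -> Msat M2 l.
Proof.
  destruct Lp_itp as (_ & _ & Lp_from_F & _).
  intros HQ HTr e. apply (sat_abs_unprimef Lp l sg M M2 e itp_consts l_abs).
  apply (Lp_from_F _ e). left. split.
  - apply all_Q_qi. apply (all_Q_agree_X M); auto.
    intros c Hc. destruct (X_unprimed c Hc) as [s [n ->]]. reflexivity.
  - apply (sat_agree (join M M2) _ e e); [|reflexivity|apply HTr].
    intros c Hc. destruct (Tr_over_X_X' c Hc) as [HX | HX'].
    + destruct (X_unprimed c HX) as [s [n ->]]. reflexivity.
    + destruct c as [|s n [|]]; simpl in HX'; try contradiction. reflexivity.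
Qed.

End NewLemma.

Lemma push_over_X (l phi psi : form) :
  (forall c, occurs c l -> In c X) ->
  Permutation (disjuncts l) (disjuncts phi ++ disjuncts psi) ->
  forall c, occurs c phi -> In c X.
Proof.
  intros Hl Hperm c Hc. apply Hl, occurs_disjuncts.
  apply occurs_disjuncts in Hc as [d [Hd Hc]]. exists d. split; [|exact Hc].
  apply (Permutation_in d (Permutation_sym Hperm)), in_or_app. left. exact Hd.
Qed.

Lemma push_Tr (phi : form) (Q : frame) :
  (forall c, occurs c phi -> In c X) ->
  (forall p c, In p Q -> occurs c (fst p) -> In c X) ->
  (forall M, Msat M phi -> all_Q M Q -> Msat M (qi Q) -> Msat M Tr ->
             Msat M (primef X phi)) ->
  forall M M2, all_Q M Q -> Msat M phi -> Msat (join M M2) Tr -> Msat M2 phi.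
Proof.
  intros Hphi HQ Hind M M2 HMQ HMphi HTr e.
  assert (Hagree : forall c, In c X -> M c = join M M2 c)
    by (intros c Hc; destruct (X_unprimed c Hc) as [s [n ->]]; reflexivity).
  assert (HjQ : all_Q (join M M2) Q) by exact (all_Q_agree_X M _ Q HQ Hagree HMQ).
  apply (sat_primef (join M M2) M2 e phi Hphi); [reflexivity|].
  apply Hind; [|exact HjQ | exact (all_Q_qi _ _ HjQ) | exact HTr].
  intro e'. apply (sat_agree M _ e' e'); [intros c Hc; apply Hagree, Hphi, Hc | reflexivity | apply HMphi].
Qed.

Record queue_inv (Qs : list pob) : Prop := {
  pob_over_X : forall m sg i, In (m, sg, i) Qs -> forall c, occurs c m -> In c X;
  pob_reaches_bad : forall m sg i, In (m, sg, i) Qs ->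
    forall M e, sat M e m -> reaches_bad M;
  pob0_initial : forall m sg, In (m, sg, 0) Qs ->
    exists M e, sat M e m /\ Msat M Init }.

Record frames_inv (N : nat) (F : nat -> frame) : Prop := {
  Init_in_frame0 : In (Init, empty_subst) (F 0);
  frames_antimono : forall i j, j <= i -> incl (F i) (F j);
  frames_over_X : forall i p c, In p (F i) -> occurs c (fst p) -> In c X;
  frames_Init : forall i M, Msat M Init -> all_Q M (F i);
  frames_Tr : forall i M M2, all_Q M (F i) -> Msat (join M M2) Tr ->
    all_Q M2 (F (S i));
  frames_exclude_Bad : forall i, i < N -> forall M, all_Q M (F i) -> ~ Msat M Bad }.

Definition quic3_inv (st : state) : Prop :=
  queue_inv (queue st) /\ frames_inv (level st) (frames st).

Lemma quic3_inv_init : quic3_inv (init_state Init).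
Proof.
  split; split; simpl; try (intros; contradiction).
  - left. reflexivity.
  - intros [|i] j Hj p Hp; [|contradiction].
    replace j with 0 by lia. exact Hp.
  - intros [|i] p c Hp; [destruct Hp as [<- | []]; apply Init_over_X | contradiction].
  - intros [|i] M HM p Hp; [destruct Hp as [<- | []]; exact HM | contradiction].
  - intros i M M2 _ _ p Hp. destruct i; contradiction.
  - intros i Hi. lia.
Qed.

Lemma queue_inv_cons Qs m sg i :
  queue_inv Qs ->
  (forall c, occurs c m -> In c X) ->
  (forall M e, sat M e m -> reaches_bad M) ->
  (i = 0 -> exists M e, sat M e m /\ Msat M Init) ->
  queue_inv ((m, sg, i) :: Qs).
Proof.
  intros [HX Hbad H0] Hm Hmbad Hm0.
  split; simpl.
  - intros m' sg' i' [Heq | Hin]; [injection Heq as <- <- <-; exact Hm | eauto].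
  - intros m' sg' i' [Heq | Hin]; [injection Heq as <- <- <-; exact Hmbad | eauto].
  - intros m' sg' [Heq | Hin]; [injection Heq as <- <- ->; auto | eauto].
Qed.

Lemma frames_inv_unfold N F :
  frames_inv N F -> implies (qi (F N)) (FNot Bad) -> frames_inv (S N) F.
Proof.
  intros [H0 Hmono HX HInit HTr HBad] Hsafe.
  split; auto.
  intros i Hi M HQ HM.
  destruct (Nat.eq_dec i N) as [-> | Hne]; [|exact (HBad i ltac:(lia) M HQ HM)].
  exact (Hsafe M env0 (all_Q_qi M _ HQ env0) (HM env0)).
Qed.

(* Lemmas added by (NewLemma) and (Push) only need to be preserved by a
   transition from [Q_i]; the antimonotony of the frames gives the rest. *)
Lemma frames_inv_add_upto N F i (l : form) (sg : subst) :
  frames_inv N F ->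
  (forall c, occurs c l -> In c X) ->
  (forall M, Msat M Init -> Msat M l) ->
  (forall M M2, all_Q M (F i) -> Msat M l -> Msat (join M M2) Tr -> Msat M2 l) ->
  frames_inv N (add_upto F (S i) (l, sg)).
Proof.
  intros [H0 Hmono HX HInit HTr HBad] Hl HlInit HlTr.
  split.
  - apply in_add_upto. right. exact H0.
  - intros i' j Hj p Hp. apply in_add_upto in Hp. apply in_add_upto.
    destruct Hp as [[Hi' ->] | Hp]; [left; split; [lia | reflexivity] | right].
    exact (Hmono i' j Hj p Hp).
  - intros i' p c Hp. apply in_add_upto in Hp.
    destruct Hp as [[_ ->] | Hp]; [apply Hl | exact (HX i' p c Hp)].
  - intros i' M HM. apply all_Q_add_upto. split; [intros _; apply HlInit|]; auto.
  - intros j M M2 HQ HM2. apply all_Q_add_upto in HQ as [HMl HQ].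
    apply all_Q_add_upto. split; [|exact (HTr j M M2 HQ HM2)].
    intros Hj. apply (HlTr M); [|apply HMl; lia | exact HM2].
    intros p Hp. apply HQ, (Hmono i j); [lia | exact Hp].
  - intros j Hj M HQ. apply all_Q_add_upto in HQ as [_ HQ]. exact (HBad j Hj M HQ).
Qed.

Lemma frames_inv_qi0_Init N F (M : interp) (e : env) :
  frames_inv N F -> sat M e (qi (F 0)) -> Msat M Init.
Proof.
  intros HF Hqi.
  apply (sat_qi_in M e _ _ (Init_in_frame0 _ _ HF)), sat_apply_subst in Hqi.
  exact (Msat_of_sat_ground _ _ _ Init_ground Hqi).
Qed.

Lemma step_preserves_inv (st st' : state) :
  quic3_inv st -> step X Init Tr Bad st st' -> quic3_inv st'.
Proof.
  intros [HQs HF] Hstep.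
  destruct Hstep as
    [Qs N F Hsafe
    |Qs N F m Hpob Hsat Hm
    |Qs N F m xi i M phi W psi sg Hin HM Hmbp Habs
    |Qs N F m sg i Lp l sg' Hi Hin _ Hitp Habs
    |Qs N F i l phi psi sg Hi Hl Hperm _ HInit Hind]; simpl in *.
  - split; [exact HQs | exact (frames_inv_unfold N F HF Hsafe)].
  - split; [|exact HF].
    apply queue_inv_cons; [exact HQs | apply Hpob | |].
    + intros M e Hme. exists 0, (fun _ => M).
      split; [reflexivity|]. split; [intros; lia|].
      exact (Msat_of_sat_ground M e Bad Bad_ground (proj2 (Hm M e Hme))).
    + intros ->. destruct Hsat as [M [e Hme]]. exists M, e.
      split; [exact Hme | exact (frames_inv_qi0_Init _ _ M e HF (proj1 (Hm M e Hme)))].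
  - split; [|exact HF].
    pose proof (pob_over_X _ HQs _ _ _ Hin) as Hm.
    apply queue_inv_cons; [exact HQs | eapply predecessor_over_X; eauto | |].
    + eapply predecessor_reaches_bad; eauto. eapply pob_reaches_bad; eauto.
    + intros ->. destruct (predecessor_model m phi psi M W sg Hmbp Habs) as [e He].
      exists M, e.
      split; [exact He | exact (frames_inv_qi0_Init _ _ M env0 HF (proj1 (HM env0)))].
  - split; [exact HQs|].
    pose proof (pob_over_X _ HQs _ _ _ Hin) as Hm.
    pose proof (frames_over_X _ _ HF i) as HFi.
    apply frames_inv_add_upto; [exact HF | eapply newlemma_over_X; eauto
                               | eapply newlemma_Init; eauto | ].
    intros M M2 HQ _. eapply newlemma_Tr; eauto.
  - split; [exact HQs|].
    pose proof (frames_over_X _ _ HF i) as HFi.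
    pose proof (push_over_X l phi psi (fun c => HFi _ c Hl) Hperm) as Hphi.
    apply frames_inv_add_upto; [exact HF | exact Hphi | exact HInit |].
    exact (push_Tr phi (F i) Hphi HFi Hind).
Qed.

Lemma reachable_inv (st : state) : reachable X Init Tr Bad st -> quic3_inv st.
Proof.
  induction 1; [exact quic3_inv_init | eapply step_preserves_inv; eauto].
Qed.

Lemma queue_inv_cex Qs m sg :
  queue_inv Qs -> In (m, sg, 0) Qs -> exists k, has_cex Init Tr Bad k.
Proof.
  intros HQs Hin.
  destruct (pob0_initial _ HQs m sg Hin) as [M [e [Hme HInit]]].
  destruct (pob_reaches_bad _ HQs m sg 0 Hin M e Hme) as [k [Ms [<- [Hpath HBad]]]].
  exists k, Ms. auto.
Qed.

Lemma frames_inv_safe N F i :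
  frames_inv N F -> i < N -> forall_incl (F i) (F (S i)) -> is_safe Init Tr Bad.
Proof.
  intros HF Hi Hincl [k [Ms [HInit [Hpath HBad]]]].
  assert (HQ : forall j, j <= k -> all_Q (Ms j) (F i)).
  { induction j as [|j IH]; intros Hj.
    - exact (frames_Init _ _ HF i _ HInit).
    - apply (all_Q_forall_incl _ _ _ Hincl), (frames_Tr _ _ HF i (Ms j));
        [apply IH | apply Hpath]; lia. }
  exact (frames_exclude_Bad _ _ HF i Hi (Ms k) (HQ k (le_n k)) HBad).
Qed.

End Soundness.

Theorem lemma3 (X : list const) (Init Tr Bad : form)
  (hP : safety_problem X Init Tr Bad)
  (s : state) (hs : reachable X Init Tr Bad s) :
  (returns_cex s -> exists k, has_cex Init Tr Bad k) /\
  (returns_safe s -> is_safe Init Tr Bad).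
Proof.
  destruct hP as (HX & HInit & _ & HBad & HInitX & _ & HTrX).
  destruct (reachable_inv X Init Tr Bad HX HInit HBad HInitX HTrX s hs)
    as [HQs HF].
  split.
  - intros [m [sg Hin]]. exact (queue_inv_cex X Init Tr Bad _ m sg HQs Hin).
  - intros [i [Hi Hincl]]. exact (frames_inv_safe X Init Tr Bad _ _ i HF Hi Hincl).
Qed.
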